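(* Fix a target task and the data below, let $\mathcal{S}\subset\mathcal{P}(\mathcal{X}_S)\times A_S$ be a set of source tasks, and for $(\mu,f)\in\mathcal{S}$ let $$\mathcal{C}(\mu,f):=\inf_{T_0^X\in\mathbb{T}_0^X,\;T_0^Y\in\mathbb{T}_0^Y} C\Big(\mathcal{E}^O\big(T_0^Y(\cdot,f(T_0^X(\cdot)))\big),\;D\big(T_0^X\#\mathrm{Law}(X_T),\mu\big)\Big).$$ Assume there is $L_Y>0$ such that for every $T_0^Y\in\mathbb{T}_0^Y$, $\|T_0^Y(x_1,y_1)-T_0^Y(x_2,y_2)\|_{\mathcal{Y}_T}\le L_Y(\|x_1-x_2\|_{\mathcal{X}_T}+\|y_1-y_2\|_{\mathcal{Y}_S})$ for all $(x_1,y_1),(x_2,y_2)\in\mathcal{X}_T\times\mathcal{Y}_S$, and there are $L'>0$, $p\ge1$ with $|\mathcal{E}^O(h_1)-\mathcal{E}^O(h_2)|\le L'\,\mathcal{W}_p(h_1\#\mathrm{Law}(X_T),h_2\#\mathrm{Law}(X_T))^p$ for all intermediate models $h_1,h_2$, i.e. all functions $x\mapsto T_0^Y(x,f(T_0^X(x)))$ with $f\in A_S$, $T_0^X\in\mathbb{T}_0^X$, $T_0^Y\in\mathbb{T}_0^Y$. Then $\mathcal{C}$ is continuous on the metric space $(\mathcal{S},d_S)$, where $d_S((\mu_1,f_1),(\mu_2,f_2)):=D(\mu_1,\mu_2)+d_M(f_1,f_2)$.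
   Context: $(\mathcal{X}_T,\|\cdot\|_{\mathcal{X}_T})$, $(\mathcal{Y}_T,\|\cdot\|_{\mathcal{Y}_T})$, $(\mathcal{X}_S,\|\cdot\|_{\mathcal{X}_S})$, $(\mathcal{Y}_S,\|\cdot\|_{\mathcal{Y}_S})$ are Banach spaces; $X_T$ is an $\mathcal{X}_T$-valued random variable. $A_S$ is a set of functions $\mathcal{X}_S\to\mathcal{Y}_S$, $A_T$ a set of functions $\mathcal{X}_T\to\mathcal{Y}_T$. $\mathbb{T}_0^X$ is a nonempty set of maps $\mathcal{X}_T\to\mathcal{X}_S$ and $\mathbb{T}_0^Y$ a nonempty set of maps $\mathcal{X}_T\times\mathcal{Y}_S\to\mathcal{Y}_T$ such that all intermediate models lie in $A_T$. $\mathcal{E}^O:A_T\to[0,\infty)$ is an output transport risk. $D$ is a metric on the set $\mathcal{P}(\mathcal{X}_S)$ of probability measures on $\mathcal{X}_S$ (the input transport risk of $T_0^X$ is $D(T_0^X\#\mathrm{Law}(X_T),\mu)$), and $\#$ denotes pushforward. $C:\mathbb{R}\times\mathbb{R}\to\mathbb{R}$ satisfies $C(0,0)=0$, is non-decreasing in each argument, and there is $L>0$ with $|C(a,b)-C(a',b')|\le L(|a-a'|+|b-b'|)$ for all $a,a',b,b'\ge0$. For a fixed constant $M>0$, $d_M(f_1,f_2):=\min\{M,\sup_{x\in\mathcal{X}_S}\|f_1(x)-f_2(x)\|_{\mathcal{Y}_S}\}$. $\mathcal{W}_p$ is the $p$-Wasserstein distance on probability measures on $\mathcal{Y}_T$ with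 respect to $\|\cdot\|_{\mathcal{Y}_T}$. *)

From HB Require Import structures.
From mathcomp Require Import all_boot all_order all_algebra.
From mathcomp Require Import all_classical all_reals all_analysis.
Set Implicit Arguments. Unset Strict Implicit. Unset Printing Implicit Defensive.
Import Order.TTheory GRing.Theory Num.Theory numFieldNormedType.Exports.
Local Open Scope classical_set_scope.
Local Open Scope ring_scope.

Definition Borel (T : topologicalType) := g_sigma_algebraType (@open T).

Definition is_prob (d : measure_display) (T : measurableType d) (R : realType)
  (m : set T -> \bar R) : Prop :=
  exists Q : probability T R, (Q : set T -> \bar R) = m.

Definition Prob (d : measure_display) (T : measurableType d) (R : realType) :
  set (set T -> \bar R) := [set m | is_prob m].

Definition is_metric_on (U : Type) (R : realType) (A : set U) (D : U -> U -> R) :=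
  [/\ forall x y, A x -> A y -> 0 <= D x y,
      forall x y, A x -> A y -> (D x y = 0 <-> x = y),
      forall x y, A x -> A y -> D x y = D y x &
      forall x y z, A x -> A y -> A z -> D x z <= D x y + D y z].

Definition couplings (R : realType) (Y : normedModType R)
  (nu1 nu2 : set (Borel Y) -> \bar R) : set (probability (Borel Y * Borel Y)%type R) :=
  [set pi | (forall A, measurable A -> pi (fst @^-1` A) = nu1 A) /\
            (forall A, measurable A -> pi (snd @^-1` A) = nu2 A)].

Definition Wasserstein (R : realType) (Y : normedModType R) (p : R)
  (nu1 nu2 : set (Borel Y) -> \bar R) : \bar R :=
  ((ereal_inf [set \int[pi]_z ((`|(z.1 : Y) - (z.2 : Y)| `^ p)%:E)
               | pi in couplings nu1 nu2]) `^ p^-1)%E.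

Definition dM (R : realType) (XS YS : normedModType R) (M : R) (f1 f2 : XS -> YS) : R :=
  fine (Order.min M%:E (ereal_sup [set (`|f1 x - f2 x|)%:E | x in [set: XS]])).
Arguments Prob {d} T R.

From HB Require Import structures.
From mathcomp Require Import all_boot all_order all_algebra.
From mathcomp Require Import all_classical all_reals all_analysis.
From mathcomp Require Import lra.
Import Order.TTheory GRing.Theory Num.Theory numFieldNormedType.Exports.
Import HBNNSimple.
Local Open Scope classical_set_scope.
Local Open Scope ring_scope.

(* For fixed maps T0X, T0Y the intermediate models built from two source tasks
   differ pointwise by at most LY dM(f1, f2).  Coupling them through the law of
   X_T bounds their p-Wasserstein distance by the same number, so the output risks
   differ by at most L' (LY dM)^p, while the input risks differ by at most
   D(mu1, mu2) by the triangle inequality.  The Lipschitz bound on C makes these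
   estimates uniform in (T0X, T0Y), so they pass to the infimum; once LY dM <= 1
   the exponent p >= 1 can be dropped and the cost is locally Lipschitz for d_S. *)

Lemma powR_le_self (R : realType) (a p : R) : 0 <= a <= 1 -> 1 <= p -> a `^ p <= a.
Proof.
case/andP => a_ge0 a_le1 p_ge1; have [->|a_neq0] := eqVneq a 0.
  by rewrite powR0 // gt_eqF // (lt_le_trans ltr01).
by apply: ge1r_powR => //; rewrite lt_neqAle eq_sym a_neq0 a_ge0.
Qed.

Lemma dist_inf_le (R : realType) (U V : set R) (B : R) :
  U !=set0 -> V !=set0 -> has_lbound U -> has_lbound V ->
  (forall u, U u -> exists2 v, V v & v <= u + B) ->
  (forall v, V v -> exists2 u, U u & u <= v + B) ->
  `|inf U - inf V| <= B.
Proof.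
move=> U0 V0 lbU lbV UV VU.
have inf_le (X Y : set R) : Y !=set0 -> has_lbound X ->
    (forall y, Y y -> exists2 x, X x & x <= y + B) -> inf X - B <= inf Y.
  move=> Y0 lbX YX; apply: lb_le_inf Y0 _ => y /YX [x Xx x_le].
  by have := ge_inf lbX Xx; lra.
have := inf_le _ _ U0 lbV UV; have := inf_le _ _ V0 lbU VU.
by rewrite ler_norml => ? ?; apply/andP; split; lra.
Qed.

Lemma metric_ler_dist (U : Type) (R : realType) (A : set U) (D : U -> U -> R) x y z :
  is_metric_on A D -> A x -> A y -> A z -> `|D x y - D x z| <= D y z.
Proof.
case=> _ _ Dsym Dtri Ax Ay Az.
have := Dtri _ _ _ Ax Ay Az; have := Dtri _ _ _ Ax Az Ay; have := Dsym _ _ Ay Az.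
by rewrite ler_norml => ? ? ?; apply/andP; split; lra.
Qed.

Section truncated_sup_distance.
Variables (R : realType) (XS YS : normedModType R) (M : R) (f1 f2 : XS -> YS).
Hypothesis M_gt0 : 0 < M.

Let sup_dist := ereal_sup [set (`|f1 x - f2 x|)%:E | x in [set: XS]].

Let dist_le_sup x : ((`|f1 x - f2 x|)%:E <= sup_dist)%E.
Proof. by apply: ereal_sup_ubound; exists x. Qed.

Let sup_dist_ge0 : (0 <= sup_dist)%E.
Proof. exact: le_trans (dist_le_sup 0). Qed.

Lemma dM_ge0 : 0 <= dM M f1 f2.
Proof. by apply: fine_ge0; rewrite le_min lee_fin (ltW M_gt0). Qed.

(* Below the truncation level, [dM] is the plain sup distance. *)
Lemma ler_dist_dM x : dM M f1 f2 < M -> `|f1 x - f2 x| <= dM M f1 f2.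
Proof.
rewrite /dM -/sup_dist; case: (leP M%:E sup_dist) => [_|sup_lt_M _]; first by rewrite ltxx.
have sup_fin : sup_dist \is a fin_num.
  by rewrite ge0_fin_numE // (lt_trans sup_lt_M) ?ltry.
by rewrite -lee_fin fineK.
Qed.

End truncated_sup_distance.

Lemma Prob_pushforward (d d' : measure_display) (T : measurableType d)
    (T' : measurableType d') (R : realType) (mu : probability T R) (f : T -> T') :
  measurable_fun setT f -> Prob T' R (pushforward mu f).
Proof.
move=> mf; pose F : {mfun T >-> T'} := HB.pack f (isMeasurableFun.Build _ _ _ _ _ mf).
by exists (distribution mu F).
Qed.

Section Wasserstein_bound.
Variables (R : realType) (Y : normedModType R) (p : R).
Hypothesis p_gt0 : 0 < p.

Let cost (z : Borel Y * Borel Y) : R := `|(z.1 : Y) - (z.2 : Y)| `^ p.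

Lemma Wasserstein_powR_le (nu1 nu2 : set (Borel Y) -> \bar R)
    (pi : probability (Borel Y * Borel Y)%type R) :
  couplings nu1 nu2 pi -> (Wasserstein p nu1 nu2 `^ p <= \int[pi]_z (cost z)%:E)%E.
Proof.
move=> pi_coupling; rewrite /Wasserstein; set F := (X in ereal_inf X).
have inf_ge0 : (0 <= ereal_inf F)%E.
  apply/ereal_infP => _ [pi' _ <-].
  by apply: integral_ge0 => z _; rewrite lee_fin powR_ge0.
rewrite -poweRrM mulVf ?gt_eqF // poweRe1 //.
by apply: ereal_inf_lbound; exists pi.
Qed.

Variables (d : measure_display) (T : measurableType d) (mu : probability T R).

(* The cost need not be measurable for the product sigma-algebra, so its
   integral is bounded through the simple functions below it. *)
Lemma integral_cost_distribution_le (phi : {mfun T >-> (Borel Y * Borel Y)%type}) K :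
  0 <= K -> (forall x, `|((phi x).1 : Y) - (phi x).2| <= K) ->
  (\int[distribution mu phi]_z (cost z)%:E <= (K `^ p)%:E)%E.
Proof.
move=> K_ge0 phiK; rewrite ge0_integralTE => [|z]; last by rewrite lee_fin powR_ge0.
apply/ereal_supP => _ [g /= g_le_cost <-].
have -> : sintegral (distribution mu phi) g = (\int[distribution mu phi]_z (g z)%:E)%E.
  by rewrite integral_nnsfun // patch_setT.
rewrite ge0_integral_pushforward //; last 2 first.
- by apply/measurable_realfun.measurable_EFinP; exact: measurable_funP.
- by move=> z _; rewrite lee_fin.
rewrite preimage_setT.
apply: (@le_trans _ _ (\int[mu]_(x in setT) (K `^ p)%:E)%E).
  apply: ge0_le_integral => //.
  - by move=> x _; rewrite lee_fin.
  - apply/measurable_realfun.measurable_EFinP.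
    by apply: measurableT_comp => //; exact: measurable_funP.
  move=> x _; apply: (le_trans (g_le_cost (phi x))); rewrite lee_fin.
  by apply: ge0_ler_powR => //; [exact: ltW | exact: normr_ge0].
rewrite integral_cst // -[leRHS]mule1.
by apply: lee_wpmul2l; [rewrite lee_fin powR_ge0 | exact: probability_le1].
Qed.

Lemma Wasserstein_pushforward_le (h1 h2 : T -> Borel Y) K :
  measurable_fun setT h1 -> measurable_fun setT h2 ->
  0 <= K -> (forall x, `|(h1 x : Y) - h2 x| <= K) ->
  (Wasserstein p (pushforward mu h1) (pushforward mu h2) `^ p <= (K `^ p)%:E)%E.
Proof.
move=> m1 m2 K_ge0 h12K.
pose phi : {mfun T >-> (Borel Y * Borel Y)%type} := HB.pack (fun x => (h1 x, h2 x))
  (isMeasurableFun.Build _ _ _ _ _ (measurable_fun_pair m1 m2)).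
apply: le_trans (integral_cost_distribution_le phi K K_ge0 h12K).
by apply: Wasserstein_powR_le; split.
Qed.

End Wasserstein_bound.

Section transfer_cost.
Local Set Implicit Arguments.
Variables (R : realType) (XT YT XS YS : normedModType R).
Variable mu : probability (Borel XT) R.
Variables (A_S : set (XS -> YS)) (TX : set (XT -> XS)) (TY : set (XT -> YS -> YT)).
Variables (EO : (XT -> YT) -> R) (C : R -> R -> R).
Variable D : (set (Borel XS) -> \bar R) -> (set (Borel XS) -> \bar R) -> R.
Variables (L M LY L' p : R).
Variable S : set ((set (Borel XS) -> \bar R) * (XS -> YS)).

Local Notation model f T0X T0Y := (fun x => T0Y x (f (T0X x))).

Definition intermediate_models : set (XT -> YT) :=
  [set h | exists f T0X T0Y, [/\ A_S f, TX T0X, TY T0Y & h = model f T0X T0Y]].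

Definition cost_at (s : (set (Borel XS) -> \bar R) * (XS -> YS)) T0X T0Y : R :=
  C (EO (model s.2 T0X T0Y)) (D (pushforward mu (T0X : Borel XT -> Borel XS)) s.1).

Definition transfer_cost s : R :=
  inf [set r | exists T0X T0Y, [/\ TX T0X, TY T0Y & r = cost_at s T0X T0Y]].

Hypotheses (TX_neq0 : TX !=set0) (TY_neq0 : TY !=set0).
Hypothesis measurable_TX :
  forall T0X, TX T0X -> measurable_fun setT (T0X : Borel XT -> Borel XS).
Hypothesis measurable_models :
  forall h, intermediate_models h -> measurable_fun setT (h : Borel XT -> Borel YT).
Hypothesis EO_ge0 : forall h, intermediate_models h -> 0 <= EO h.
Hypothesis D_metric : is_metric_on (Prob (Borel XS) R) D.
Hypothesis C00 : C 0 0 = 0.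
Hypothesis C_homo_l : forall a a' b, a <= a' -> C a b <= C a' b.
Hypothesis C_homo_r : forall a b b', b <= b' -> C a b <= C a b'.
Hypothesis L_gt0 : 0 < L.
Hypothesis C_lipschitz : forall a a' b b', 0 <= a -> 0 <= a' -> 0 <= b -> 0 <= b' ->
  `|C a b - C a' b'| <= L * (`|a - a'| + `|b - b'|).
Hypothesis M_gt0 : 0 < M.
Hypothesis S_tasks : S `<=` [set s | Prob (Borel XS) R s.1 /\ A_S s.2].
Hypothesis LY_gt0 : 0 < LY.
Hypothesis TY_lipschitz : forall T0Y, TY T0Y -> forall x1 y1 x2 y2,
  `|T0Y x1 y1 - T0Y x2 y2| <= LY * (`|x1 - x2| + `|y1 - y2|).
Hypotheses (L'_gt0 : 0 < L') (p_ge1 : 1 <= p).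
Hypothesis EO_Wasserstein : forall h1 h2,
  intermediate_models h1 -> intermediate_models h2 ->
  (`|EO h1 - EO h2|%:E <= L'%:E *
     (Wasserstein p (pushforward mu (h1 : Borel XT -> Borel YT))
                    (pushforward mu (h2 : Borel XT -> Borel YT))) `^ p)%E.

Let mem_intermediate_models s T0X T0Y :
  S s -> TX T0X -> TY T0Y -> intermediate_models (model s.2 T0X T0Y).
Proof. by move=> /S_tasks[_ As] TX0 TY0; exists s.2, T0X, T0Y. Qed.

Let Prob_pushforward_TX T0X :
  TX T0X -> Prob (Borel XS) R (pushforward mu (T0X : Borel XT -> Borel XS)).
Proof. by move=> /measurable_TX; exact: Prob_pushforward. Qed.

Lemma cost_at_ge0 s T0X T0Y : S s -> TX T0X -> TY T0Y -> 0 <= cost_at s T0X T0Y.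
Proof.
move=> Ss TX0 TY0; have [[Ps _] [D_ge0 _ _ _]] := (S_tasks Ss, D_metric).
have EO_ge0' := EO_ge0 (mem_intermediate_models Ss TX0 TY0).
have D_ge0' := D_ge0 _ _ (Prob_pushforward_TX TX0) Ps.
by rewrite -C00; apply: le_trans (C_homo_r _ _ _ D_ge0') (C_homo_l _ _ _ EO_ge0').
Qed.

Lemma output_risk_dist_le s1 s2 T0X T0Y : S s1 -> S s2 -> TX T0X -> TY T0Y ->
  dM M s1.2 s2.2 < M ->
  `|EO (model s1.2 T0X T0Y) - EO (model s2.2 T0X T0Y)| <= L' * (LY * dM M s1.2 s2.2) `^ p.
Proof.
move=> S1 S2 TX0 TY0 dM_lt_M; have p_gt0 : 0 < p by apply: lt_le_trans p_ge1.
have [IM1 IM2] := (mem_intermediate_models S1 TX0 TY0, mem_intermediate_models S2 TX0 TY0).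
rewrite -lee_fin EFinM; apply: le_trans (EO_Wasserstein IM1 IM2) _.
apply: lee_wpmul2l; first by rewrite lee_fin ltW.
apply: Wasserstein_pushforward_le (measurable_models IM1) (measurable_models IM2) _ _ => //.
  by rewrite mulr_ge0 ?dM_ge0 ?ltW.
move=> x /=; apply: le_trans (TY_lipschitz TY0 _ _ _ _) _.
by rewrite subrr normr0 add0r; apply: ler_wpM2l; [exact: ltW | exact: ler_dist_dM].
Qed.

Lemma cost_at_dist_le s1 s2 T0X T0Y : S s1 -> S s2 -> TX T0X -> TY T0Y ->
  dM M s1.2 s2.2 < M ->
  `|cost_at s1 T0X T0Y - cost_at s2 T0X T0Y|
    <= L * (L' * (LY * dM M s1.2 s2.2) `^ p + D s1.1 s2.1).
Proof.
move=> S1 S2 TX0 TY0 dM_lt_M.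
have [[P1 _] [P2 _]] := (S_tasks S1, S_tasks S2).
have P0 := Prob_pushforward_TX TX0.
have [D_ge0 _ _ _] := D_metric.
apply: le_trans (C_lipschitz _ _ _ _ (EO_ge0 (mem_intermediate_models S1 TX0 TY0)) (EO_ge0 (mem_intermediate_models S2 TX0 TY0))
  (D_ge0 _ _ P0 P1) (D_ge0 _ _ P0 P2)) _.
apply: ler_wpM2l; first exact: ltW.
apply: lerD; first exact: output_risk_dist_le.
exact: metric_ler_dist D_metric P0 P1 P2.
Qed.

Lemma transfer_cost_dist_le s1 s2 : S s1 -> S s2 -> dM M s1.2 s2.2 < M ->
  `|transfer_cost s1 - transfer_cost s2|
    <= L * (L' * (LY * dM M s1.2 s2.2) `^ p + D s1.1 s2.1).
Proof.
move=> S1 S2 dM_lt_M.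
have costs_neq0 s : [set r | exists T0X T0Y, [/\ TX T0X, TY T0Y & r = cost_at s T0X T0Y]] !=set0.
  by case: TX_neq0 => T0X ?; case: TY_neq0 => T0Y ?; exists (cost_at s T0X T0Y), T0X, T0Y.
have costs_lb s : S s -> has_lbound
    [set r | exists T0X T0Y, [/\ TX T0X, TY T0Y & r = cost_at s T0X T0Y]].
  by move=> Ss; exists 0 => _ [T0X [T0Y [TX0 TY0 ->]]]; exact: cost_at_ge0.
apply: dist_inf_le (costs_neq0 _) (costs_neq0 _) (costs_lb _ S1) (costs_lb _ S2) _ _.
- move=> _ [T0X [T0Y [TX0 TY0 ->]]]; exists (cost_at s2 T0X T0Y); first by exists T0X, T0Y.
  exact/ler_distlCDr/cost_at_dist_le.
- move=> _ [T0X [T0Y [TX0 TY0 ->]]]; exists (cost_at s1 T0X T0Y); first by exists T0X, T0Y.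
  exact/ler_distlDr/cost_at_dist_le.
Qed.

Lemma transfer_cost_locally_lipschitz s1 s2 : S s1 -> S s2 ->
  dM M s1.2 s2.2 < M -> LY * dM M s1.2 s2.2 <= 1 ->
  `|transfer_cost s1 - transfer_cost s2|
    <= L * (L' * LY + 1) * (D s1.1 s2.1 + dM M s1.2 s2.2).
Proof.
move=> S1 S2 dM_lt_M LYdM_le1; apply: le_trans (transfer_cost_dist_le S1 S2 dM_lt_M) _.
have [[[P1 _] [P2 _]] [D_ge0 _ _ _]] := (S_tasks S1, S_tasks S2, D_metric).
have D12_ge0 := D_ge0 _ _ P1 P2.
have dM_nneg : 0 <= dM M s1.2 s2.2 by exact: dM_ge0.
have powR_le : (LY * dM M s1.2 s2.2) `^ p <= LY * dM M s1.2 s2.2.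
  by apply: powR_le_self => //; rewrite LYdM_le1 andbT mulr_ge0 // ltW.
rewrite -mulrA; apply: ler_wpM2l; first exact: ltW.
have := ler_wpM2l (ltW L'_gt0) powR_le.
have := mulr_ge0 (mulr_ge0 (ltW L'_gt0) (ltW LY_gt0)) D12_ge0.
nra.
Qed.

Lemma transfer_cost_continuous s : S s -> forall e, 0 < e ->
  exists2 del, 0 < del & forall s', S s' ->
    D s.1 s'.1 + dM M s.2 s'.2 < del -> `|transfer_cost s - transfer_cost s'| < e.
Proof.
move=> Ss e e_gt0; pose K := L * (L' * LY + 1).
have K_gt0 : 0 < K by rewrite mulr_gt0 // ltr_wpDl ?mulr_ge0 ?ltW.
exists (Num.min M (Num.min LY^-1 (e / K))).
  by rewrite !lt_min M_gt0 invr_gt0 LY_gt0 divr_gt0.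
move=> s' Ss'; rewrite !lt_min => /and3P[lt_M lt_LY lt_eK].
have [[[P1 _] [P2 _]] [D_ge0 _ _ _]] := (S_tasks Ss, S_tasks Ss', D_metric).
have D_nneg := D_ge0 _ _ P1 P2.
have dM_nneg : 0 <= dM M s.2 s'.2 by exact: dM_ge0.
have LYdM_le1 : LY * dM M s.2 s'.2 <= 1.
  by rewrite -(mulfV (lt0r_neq0 LY_gt0)); apply: ler_wpM2l; [exact: ltW | lra].
apply: le_lt_trans (transfer_cost_locally_lipschitz Ss Ss' _ LYdM_le1) _; first lra.
by rewrite -/K mulrC -ltr_pdivlMr.
Qed.

End transfer_cost.

Theorem proposition8 (R : realType)
  (XT YT XS YS : completeNormedModType R)
  (dO : measure_display) (Om : measurableType dO) (P : probability Om R)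
  (X_T : Om -> XT) (mX : measurable_fun [set: Om] (X_T : Om -> Borel XT))
  (A_S : set (XS -> YS)) (A_T : set (XT -> YT))
  (TX : set (XT -> XS)) (TY : set (XT -> YS -> YT))
  (hTX0 : TX !=set0) (hTY0 : TY !=set0)
  (EO : (XT -> YT) -> R) (D : (set (Borel XS) -> \bar R) -> (set (Borel XS) -> \bar R) -> R)
  (C : R -> R -> R) (L M LY L' p : R)
  (S : set ((set (Borel XS) -> \bar R) * (XS -> YS))) :
  let Law := pushforward P (X_T : Om -> Borel XT) in
  let IM := [set h : XT -> YT | exists f T0X T0Y, [/\ A_S f, TX T0X, TY T0Y &
                  h = (fun x => T0Y x (f (T0X x)))]] in
  let Cost (s : (set (Borel XS) -> \bar R) * (XS -> YS)) :=
    inf [set r | exists T0X T0Y, [/\ TX T0X, TY T0Y &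
           r = C (EO (fun x => T0Y x (s.2 (T0X x))))
                 (D (pushforward Law (T0X : Borel XT -> Borel XS)) s.1)]] in
  let dS (s1 s2 : (set (Borel XS) -> \bar R) * (XS -> YS)) :=
    D s1.1 s2.1 + dM M s1.2 s2.2 in
  (* well-definedness of the pushforwards *)
  (forall T0X, TX T0X -> measurable_fun [set: Borel XT] (T0X : Borel XT -> Borel XS)) ->
  (forall h, IM h -> measurable_fun [set: Borel XT] (h : Borel XT -> Borel YT)) ->
  (* standing assumptions *)
  IM `<=` A_T ->
  (forall h, A_T h -> 0 <= EO h) ->
  is_metric_on (Prob (Borel XS) R) D ->
  C 0 0 = 0 ->
  (forall a a' b, a <= a' -> C a b <= C a' b) ->
  (forall a b b', b <= b' -> C a b <= C a b') ->
  0 < L ->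
  (forall a a' b b', 0 <= a -> 0 <= a' -> 0 <= b -> 0 <= b' ->
     `|C a b - C a' b'| <= L * (`|a - a'| + `|b - b'|)) ->
  0 < M ->
  S `<=` [set s | Prob (Borel XS) R s.1 /\ A_S s.2] ->
  (* hypotheses of the proposition *)
  0 < LY ->
  (forall T0Y, TY T0Y -> forall x1 y1 x2 y2,
     `|T0Y x1 y1 - T0Y x2 y2| <= LY * (`|x1 - x2| + `|y1 - y2|)) ->
  0 < L' -> 1 <= p ->
  (forall h1 h2, IM h1 -> IM h2 ->
     (`|EO h1 - EO h2|%:E <= L'%:E *
        (Wasserstein p (pushforward Law (h1 : Borel XT -> Borel YT))
                       (pushforward Law (h2 : Borel XT -> Borel YT))) `^ p)%E) ->
  (* conclusion: Cost is continuous on the metric space (S, dS) *)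
  forall s, S s -> forall e : R, 0 < e -> exists2 del : R, 0 < del &
    forall s', S s' -> dS s s' < del -> `|Cost s - Cost s'| < e.
Proof.
move=> Law IM Cost dS measurable_TX measurable_IM IM_A_T EO_ge0.
pose X : {mfun Om >-> Borel XT} :=
  HB.pack (X_T : Om -> Borel XT) (isMeasurableFun.Build _ _ _ _ _ mX).
have EO_IM_ge0 h : IM h -> 0 <= EO h by move/IM_A_T/EO_ge0.
exact: (transfer_cost_continuous (distribution P X) EO C L M LY L' p hTX0 hTY0
  measurable_TX measurable_IM EO_IM_ge0).
Qed.
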